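(* Let $n\ge 2$, let $\mathcal{L}\subset\mathbb{R}^n$ be a tame lattice with Lagrangian basis $\{\mathbf{e}_1,\dots,\mathbf{e}_n\}$, $\mathbf{v}_1=\sum_i\mathbf{e}_i$, $a:=\langle\mathbf{e}_1,\mathbf{e}_1\rangle$, $h:=-\langle\mathbf{e}_1,\mathbf{e}_2\rangle$. Let $r,s$ be integers with $0\ne|r|<n$ and suppose $s=rh$. Then the dual lattice of $\mathcal{L}_{\mathbf{v}_1}^{(r,s)}$ equals $\frac{1}{r(a+h)}\mathcal{L}$.
   Context: Tame lattice: a full-rank lattice $\mathcal{L}\subset\mathbb{R}^n$ with a basis $\{\mathbf{e}_1,\dots,\mathbf{e}_n\}$ (Lagrangian basis) and nonzero $\mathbf{v}_1\in\mathcal{L}\cap\mathcal{L}^*$ such that $\sum_i\mathbf{e}_i=\mathbf{v}_1$, $\langle\mathbf{e}_i,\mathbf{v}_1\rangle=1$, $\langle\mathbf{e}_i,\mathbf{e}_i\rangle=a$, $\langle\mathbf{e}_i,\mathbf{e}_j\rangle=-h$ ($i\ne j$); then $a-h(n-1)=1$ and $a+h>0$. $\mathcal{L}^{(r,s)}_{\mathbf{v}_1}$ is the image of $\mathcal{L}$ under $\mathbf{x}\mapsto r\mathbf{x}+s\langle\mathbf{x},\mathbf{v}_1\rangle\mathbf{v}_1$. The dual of a lattice $\Lambda\subset\mathbb{R}^n$ is $\Lambda^*=\{\mathbf{v}:\langle\mathbf{v},\mathbf{x}\rangle\in\mathbb{Z}\ \forall\mathbf{x}\in\Lambda\}$. 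*)

From HB Require Import structures.
From mathcomp Require Import all_boot all_order all_algebra.
From mathcomp Require Import reals.
Set Implicit Arguments. Unset Strict Implicit. Unset Printing Implicit Defensive.
Import Order.TTheory GRing.Theory Num.Theory.
Local Open Scope ring_scope.

Section Lattices.
Variables (R : realType) (n : nat).

Definition dot (u v : 'rV[R]_n) : R := \sum_(i < n) u 0 i * v 0 i.

Definition lattice_of (e : 'I_n -> 'rV[R]_n) : 'rV[R]_n -> Prop :=
  fun x => exists z : 'I_n -> int, x = \sum_(i < n) ((z i)%:~R : R) *: e i.

Definition dual (L : 'rV[R]_n -> Prop) : 'rV[R]_n -> Prop :=
  fun v => forall x, L x -> exists k : int, dot v x = k%:~R.

Definition tame (e : 'I_n -> 'rV[R]_n) (v1 : 'rV[R]_n) (a h : R) : Prop :=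
  row_free (\matrix_(i < n) e i) /\
      v1 != 0 /\
      lattice_of e v1 /\ dual (lattice_of e) v1 /\
      \sum_(i < n) e i = v1 /\
      (forall i, dot (e i) v1 = 1) /\
      (forall i, dot (e i) (e i) = a) /\
      (forall i j, i != j -> dot (e i) (e j) = - h).

Definition rs_map (r s : R) (v1 x : 'rV[R]_n) : 'rV[R]_n :=
  r *: x + (s * dot x v1) *: v1.

Definition lattice_rs (L : 'rV[R]_n -> Prop) (r s : R) (v1 : 'rV[R]_n)
  : 'rV[R]_n -> Prop := fun y => exists x, L x /\ y = rs_map r s v1 x.

Definition scale_lattice (c : R) (L : 'rV[R]_n -> Prop) : 'rV[R]_n -> Prop :=
  fun y => exists x, L x /\ y = c *: x.

End Lattices.

From HB Require Import structures.
From mathcomp Require Import all_boot all_order all_algebra.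
From mathcomp Require Import reals.
From mathcomp Require Import ring lra.
Set Implicit Arguments. Unset Strict Implicit. Unset Printing Implicit Defensive.
Import Order.TTheory GRing.Theory Num.Theory.
Local Open Scope ring_scope.

(* Write c := r (a + h).  The Gram matrix of a tame basis is
   <e_i, e_j> = (a + h) [i = j] - h, and <x, v1> is the coordinate sum of x,
   so with s = r h the pairing between x = sum_k t_k e_k and the image of
   sum_k z_k e_k under x |-> r x + s <x, v1> v1 collapses to
   c * sum_k t_k z_k: the correction term s <.,v1> v1 exactly cancels the
   off-diagonal -h part of the Gram matrix.  Both inclusions follow:
   - if y = c^-1 sum_k w_k e_k with w integral, every pairing is the integer
     sum_k w_k z_k;
   - conversely, since e is a basis every y has coordinates t, and pairing y
     with the image of e_i gives c t_i, which must be an integer. *)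

Section InnerProduct.
Variables (R : realType) (n : nat).
Implicit Types (u v w : 'rV[R]_n).

Lemma dotC u v : dot u v = dot v u.
Proof. by rewrite /dot; apply: eq_bigr => i _; rewrite mulrC. Qed.

Lemma dotDl u v w : dot (u + v) w = dot u w + dot v w.
Proof. by rewrite /dot -big_split; apply: eq_bigr => i _; rewrite mxE mulrDl. Qed.

Lemma dotZl c u w : dot (c *: u) w = c * dot u w.
Proof. by rewrite /dot mulr_sumr; apply: eq_bigr => i _; rewrite mxE mulrA. Qed.

Lemma dotNl u w : dot (- u) w = - dot u w.
Proof. by rewrite -scaleN1r dotZl mulN1r. Qed.

Lemma dotDr u v w : dot w (u + v) = dot w u + dot w v.
Proof. by rewrite dotC dotDl !(dotC w). Qed.

Lemma dotZr c u w : dot w (c *: u) = c * dot w u.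
Proof. by rewrite dotC dotZl dotC. Qed.

Lemma dotNr u w : dot w (- u) = - dot w u.
Proof. by rewrite dotC dotNl dotC. Qed.

Lemma dot_combl (z : 'I_n -> R) (e : 'I_n -> 'rV[R]_n) w :
  dot (\sum_(k < n) z k *: e k) w = \sum_(k < n) z k * dot (e k) w.
Proof.
have dot0l : dot 0 w = 0 by rewrite /dot big1 // => i _; rewrite mxE mul0r.
rewrite (big_morph (fun u => dot u w) (fun u v => dotDl u v w) dot0l).
by apply: eq_bigr => k _; rewrite dotZl.
Qed.

Lemma dot_combr (z : 'I_n -> R) (e : 'I_n -> 'rV[R]_n) w :
  dot w (\sum_(k < n) z k *: e k) = \sum_(k < n) z k * dot w (e k).
Proof. by rewrite dotC dot_combl; apply: eq_bigr => k _; rewrite dotC. Qed.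

Lemma dot_self_eq0 u : dot u u = 0 -> u = 0.
Proof.
move=> /eqP; rewrite /dot psumr_eq0 => [/allP u0|k _]; last first.
  by rewrite -expr2 sqr_ge0.
apply/matrixP => i j; rewrite !mxE (ord1 i).
by have /= := u0 j (mem_index_enum j); rewrite -expr2 sqrf_eq0 => /eqP.
Qed.

End InnerProduct.

Section Basis.
Variables (R : fieldType) (n : nat) (e : 'I_n -> 'rV[R]_n).
Hypothesis e_free : row_free (\matrix_(i < n) e i).

Lemma basis_inj : injective e.
Proof.
move=> i j eij.
have : ('e_i : 'rV[R]_n) *m \matrix_k e k = 'e_j *m \matrix_k e k.
  by rewrite -!rowE !rowK.
move/(row_free_inj e_free)/matrixP/(_ 0 i); rewrite !mxE !eqxx /=.
by case: (i =P j) => // _ /eqP; rewrite mulr0n oner_eq0.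
Qed.

Lemma basis_coords y : exists t : 'I_n -> R, y = \sum_(k < n) t k *: e k.
Proof.
exists (fun k => (y *m invmx (\matrix_i e i)) 0 k).
rewrite -{1}(mulmxKV (_ : \matrix_i e i \in unitmx) y); last first.
  by rewrite -row_free_unit.
by rewrite mulmx_sum_row; apply: eq_bigr => k _; rewrite rowK.
Qed.

End Basis.

Section TameGram.
Variables (R : realType) (n : nat) (e : 'I_n -> 'rV[R]_n) (v1 : 'rV[R]_n).
Variables (a h : R).
Hypothesis e_v1 : forall i, dot (e i) v1 = 1.
Hypothesis e_diag : forall i, dot (e i) (e i) = a.
Hypothesis e_offdiag : forall i j, i != j -> dot (e i) (e j) = - h.

Lemma tame_gram i j : dot (e i) (e j) = (a + h) * (i == j)%:R - h.
Proof.
case: (eqVneq i j) => [->|ne]; first by rewrite e_diag mulr1 addrK.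
by rewrite e_offdiag // mulr0 sub0r.
Qed.

(* Two distinct basis vectors are at squared distance 2 (a + h), so a + h
   vanishes only if the basis is degenerate. *)
Lemma tame_ah_neq0 :
  (2 <= n)%N -> row_free (\matrix_(i < n) e i) -> a + h != 0.
Proof.
move=> n_ge2 e_free; apply/eqP => ah0.
pose i0 : 'I_n := Ordinal (ltnW n_ge2); pose i1 : 'I_n := Ordinal n_ge2.
have e01 : e i0 - e i1 = 0.
  apply: dot_self_eq0.
  by rewrite !(dotDl, dotDr, dotNl, dotNr) !tame_gram !eqxx /= ah0; lra.
by move/subr0_eq/(basis_inj e_free): e01.
Qed.

Lemma dot_comb_v1 (z : 'I_n -> R) :
  dot (\sum_(k < n) z k *: e k) v1 = \sum_(k < n) z k.
Proof. by rewrite dot_combl; apply: eq_bigr => k _; rewrite e_v1 mulr1. Qed.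

Lemma dot_basis_comb (z : 'I_n -> R) j :
  dot (e j) (\sum_(k < n) z k *: e k) = (a + h) * z j - h * \sum_(k < n) z k.
Proof.
rewrite dot_combr.
under eq_bigr do rewrite tame_gram mulrBr mulrCA.
rewrite sumrB -mulr_sumr -mulr_suml (bigD1 j) //= eqxx mulr1.
rewrite big1 => [|k /negbTE]; last by rewrite eq_sym => ->; rewrite !mulr0.
by rewrite addr0 [_ * h]mulrC.
Qed.

(* Key identity: with s = r h, the transformed basis is c-times the dual
   basis, c = r (a + h). *)
Lemma dot_basis_rs_map (r : R) (z : 'I_n -> R) j :
  dot (e j) (rs_map r (r * h) v1 (\sum_(k < n) z k *: e k))
  = r * (a + h) * z j.
Proof.
rewrite /rs_map dotDr !dotZr dot_basis_comb dot_comb_v1 e_v1; ring.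
Qed.

Lemma dot_rs_map (r : R) (t z : 'I_n -> R) :
  dot (\sum_(k < n) t k *: e k) (rs_map r (r * h) v1 (\sum_(k < n) z k *: e k))
  = r * (a + h) * \sum_(k < n) t k * z k.
Proof.
rewrite dot_combl mulr_sumr; apply: eq_bigr => k _.
by rewrite dot_basis_rs_map mulrCA.
Qed.

End TameGram.

Section DualOfTransform.
Variables (R : realType) (n : nat) (e : 'I_n -> 'rV[R]_n) (v1 : 'rV[R]_n).
Variables (a h r : R).
Hypothesis e_v1 : forall i, dot (e i) v1 = 1.
Hypothesis e_diag : forall i, dot (e i) (e i) = a.
Hypothesis e_offdiag : forall i j, i != j -> dot (e i) (e j) = - h.
Hypothesis c_neq0 : r * (a + h) != 0.

Let L := lattice_of e.
Let c := r * (a + h).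

Lemma scaled_sub_dual y :
  scale_lattice c^-1 L y -> dual (lattice_rs L r (r * h) v1) y.
Proof.
move=> [_ [[w ->] ->]] _ [_ [[z ->] ->]].
exists (\sum_(k < n) w k * z k).
rewrite dotZl (dot_rs_map e_v1 e_diag e_offdiag) mulKf //.
by rewrite rmorph_sum; apply: eq_bigr => k _; rewrite /= intrM.
Qed.

(* Conversely, the coordinates of a dual vector lie in c^-1 Z: pair it with
   the image of each basis vector e_i. *)
Lemma dual_sub_scaled y : row_free (\matrix_(i < n) e i) ->
  dual (lattice_rs L r (r * h) v1) y -> scale_lattice c^-1 L y.
Proof.
move=> e_free; have [t ->] := basis_coords e_free y => y_dual.
have t_int i : exists k : int, t i = c^-1 * k%:~R.
  pose z k : int := if k == i then 1 else 0.
  have [|k yk] := y_dual (rs_map r (r * h) v1 (\sum_(k < n) (z k)%:~R *: e k)).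
    by exists (\sum_(k < n) (z k)%:~R *: e k); split => //; exists z.
  exists k; rewrite -yk (dot_rs_map e_v1 e_diag e_offdiag) (bigD1 i) //=.
  rewrite big1 => [|j /negbTE ji].
    by rewrite /z eqxx mulr1z mulr1 addr0 mulKf.
  by rewrite /z ji mulr0z mulr0.
have [k tk] := fin_all_exists t_int.
exists (\sum_(i < n) (k i)%:~R *: e i); split; first by exists k.
by rewrite scaler_sumr; apply: eq_bigr => i _; rewrite scalerA -tk.
Qed.

End DualOfTransform.

Theorem mainTheorem9 (R : realType) (n : nat) (hn : (2 <= n)%N)
    (e : 'I_n -> 'rV[R]_n) (v1 : 'rV[R]_n) (a h : R)
    (Htame : tame e v1 a h) (r s : int)
    (hr0 : r != 0) (hrn : (`|r| < n)%N) (hs : s%:~R = r%:~R * h) :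
  forall y : 'rV[R]_n,
    dual (lattice_rs (lattice_of e) r%:~R s%:~R v1) y <->
    scale_lattice (r%:~R * (a + h))^-1 (lattice_of e) y.
Proof.
move=> y; case: Htame => e_free [_ [_ [_ [_ [e_v1 [e_diag e_offdiag]]]]]].
have c_neq0 : r%:~R * (a + h) != 0 :> R.
  by rewrite mulf_neq0 ?intr_eq0 ?(tame_ah_neq0 e_diag e_offdiag).
rewrite hs; split.
- exact: dual_sub_scaled.
- exact: scaled_sub_dual.
Qed.
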